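(* Define $\rho:M\times M\to[1,\infty)$ by $$\rho\big((y,x),(y',x')\big)=1+|y-y'|+2\inf\Big\{t\ge0:\ \sum_{i=1}^de^{-2\lambda_i(t+\max(y,y'))}(x_i-x_i')^2\le1\Big\}.$$ Then there exists $C_\rho>0$ such that $\mathrm{dist}(p,q)\le\rho(p,q)\le\mathrm{dist}(p,q)+C_\rho$ for all $p,q\in M$.
   Context: Let $d\ge1$, $0<\lambda_1\le\cdots\le\lambda_d$, and $M$ be $\mathbb{R}^{d+1}$ with coordinates $(y,x)=(y,x_1,\dots,x_d)$ and metric $g=dy^2+\sum_{i=1}^d e^{-2\lambda_i y}dx_i^2$; $\mathrm{dist}$ is its Riemannian distance. *)

From Stdlib Require Import Reals.
From Coquelicot Require Import Coquelicot.
Open Scope R_scope.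

Fixpoint sum_upto (d : nat) (f : nat -> R) : R :=
  match d with
  | O => 0
  | S n => sum_upto n f + f n
  end.

(* A point of M = R^{d+1}: (y, x) with x_i := x (i-1) for i = 1..d
   (coordinates x k with k >= d are irrelevant). *)
Definition Pt : Type := (R * (nat -> R))%type.

Definition C1 (f : R -> R) : Prop :=
  forall t, ex_derive f t /\ continuous (Derive f) t.

(* Speed of the curve (cy, cx) w.r.t. g = dy^2 + sum_i e^{-2 lambda_i y} dx_i^2 *)
Definition speed (d : nat) (lam : nat -> R) (cy : R -> R) (cx : nat -> R -> R)
  (t : R) : R :=
  sqrt (Derive cy t ^ 2 +
        sum_upto d (fun i => exp (-2 * lam i * cy t) * Derive (cx i) t ^ 2)).

Definition curve_length (d : nat) (lam : nat -> R) (cy : R -> R)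
  (cx : nat -> R -> R) : R :=
  RInt (speed d lam cy cx) 0 1.

(* C^1 curves t in [0,1] |-> (cy t, cx t) from p to q (defined and C^1 on all
   of R; every C^1 curve on [0,1] extends to such a one). *)
Definition admissible_curve (d : nat) (p q : Pt) (cy : R -> R)
  (cx : nat -> R -> R) : Prop :=
  C1 cy /\ (forall i, (i < d)%nat -> C1 (cx i)) /\
  cy 0 = fst p /\ cy 1 = fst q /\
  (forall i, (i < d)%nat -> cx i 0 = snd p i /\ cx i 1 = snd q i).

Definition rdist (d : nat) (lam : nat -> R) (p q : Pt) : R :=
  real (Glb_Rbar (fun L => exists cy cx,
          admissible_curve d p q cy cx /\ L = curve_length d lam cy cx)).

Definition rho (d : nat) (lam : nat -> R) (p q : Pt) : R :=
  1 + Rabs (fst p - fst q) +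
  2 * real (Glb_Rbar (fun t => 0 <= t /\
        sum_upto d (fun i => exp (-2 * lam i * (t + Rmax (fst p) (fst q))) *
                              (snd p i - snd q i) ^ 2) <= 1)).

From Pilot Require Import Defs.
From Stdlib Require Import Reals Lra Lia Psatz.
From Coquelicot Require Import Coquelicot.
Open Scope R_scope.

(* Upper bound: if [t] lies in the set defining [rho], the curve that climbs from
   height [y] to [Y = t + max y y'], crosses horizontally at height [Y] and descends
   to [y'] has length at most [(Y - y) + (Y - y') + 1 = 2 t + |y - y'| + 1], since at
   height [Y] the whole horizontal displacement has length at most 1.
   Lower bound: on a curve of length [L] the height at arc length [s] is at most
   [min (y + s) (y' + L - s)], so [|x_i'| <= exp (lam_i height) * speed] integrates,
   through an arctangent primitive in [s], to
   [|x_i - x_i'| <= pi exp (lam_i (y + y' + L) / 2) / lam_i].  Hence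
   [(L - |y - y'|) / 2 + d pi^2 / (2 lam_1^3)] lies in the set defining [rho], and
   [rho <= L + 1 + d pi^2 / lam_1^3]. *)

Lemma sum_upto_nonneg n f :
  (forall i, (i < n)%nat -> 0 <= f i) -> 0 <= sum_upto n f.
Proof.
  induction n as [|n IH]; simpl; intros Hf; [lra|].
  assert (0 <= f n) by (apply Hf; lia).
  assert (0 <= sum_upto n f) by (apply IH; intros; apply Hf; lia).
  lra.
Qed.

Lemma sum_upto_le n f g :
  (forall i, (i < n)%nat -> f i <= g i) -> sum_upto n f <= sum_upto n g.
Proof.
  induction n as [|n IH]; simpl; intros Hfg; [lra|].
  assert (f n <= g n) by (apply Hfg; lia).
  assert (sum_upto n f <= sum_upto n g) by (apply IH; intros; apply Hfg; lia).
  lra.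
Qed.

Lemma sum_upto_ge_term n f i :
  (forall j, (j < n)%nat -> 0 <= f j) -> (i < n)%nat -> f i <= sum_upto n f.
Proof.
  induction n as [|n IH]; simpl; intros Hf Hi; [lia|].
  assert (0 <= f n) by (apply Hf; lia).
  destruct (Nat.eq_dec i n) as [->|Hne].
  - assert (0 <= sum_upto n f) by (apply sum_upto_nonneg; intros; apply Hf; lia).
    lra.
  - assert (f i <= sum_upto n f) by (apply IH; [intros; apply Hf|]; lia).
    lra.
Qed.

Lemma sum_upto_scal_l n c f :
  sum_upto n (fun i => c * f i) = c * sum_upto n f.
Proof. induction n as [|n IH]; simpl; [|rewrite IH]; ring. Qed.

Lemma sum_upto_le_1 n f :
  (1 <= n)%nat -> (forall i, (i < n)%nat -> f i <= / INR n) -> sum_upto n f <= 1.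
Proof.
  intros Hn Hf.
  assert (Hconst : forall m, sum_upto m (fun _ => / INR n) = INR m * / INR n).
  { induction m as [|m IH]; simpl sum_upto; [simpl; ring|].
    rewrite IH, S_INR; ring. }
  assert (0 < INR n) by (apply lt_0_INR; lia).
  apply (Rle_trans _ (sum_upto n (fun _ => / INR n))).
  - exact (sum_upto_le n f _ Hf).
  - rewrite Hconst; right; field; lra.
Qed.

Lemma continuous_sum_upto n (f : nat -> R -> R) x :
  (forall i, (i < n)%nat -> continuous (f i) x) ->
  continuous (fun t => sum_upto n (fun i => f i t)) x.
Proof.
  induction n as [|n IH]; simpl; intros Hf.
  - apply continuous_const.
  - apply (continuous_plus (fun t => sum_upto n (fun i => f i t)) (f n));
      [apply IH; intros|]; apply Hf; lia.
Qed.

Section InfimumOfNonnegSet.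
Variable E : R -> Prop.
Hypothesis E_nonneg : forall x, E x -> 0 <= x.

Lemma Glb_Rbar_nonneg_finite x0 : E x0 -> Glb_Rbar E = Finite (real (Glb_Rbar E)).
Proof.
  intros Ex0. destruct (Glb_Rbar_correct E) as [Hlb Hglb].
  assert (Rbar_le (Glb_Rbar E) x0) by (apply Hlb; exact Ex0).
  assert (Rbar_le 0 (Glb_Rbar E)) by (apply Hglb; intros x Ex; apply E_nonneg, Ex).
  destruct (Glb_Rbar E); simpl in *; tauto.
Qed.

Lemma Glb_Rbar_nonneg_le x : E x -> real (Glb_Rbar E) <= x.
Proof.
  intros Ex. destruct (Glb_Rbar_correct E) as [Hlb _].
  generalize (Hlb x Ex). rewrite (Glb_Rbar_nonneg_finite x Ex). easy.
Qed.

Lemma Glb_Rbar_nonneg_ge x0 b : E x0 ->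
  (forall x, E x -> b <= x) -> b <= real (Glb_Rbar E).
Proof.
  intros Ex0 Hb. destruct (Glb_Rbar_correct E) as [_ Hglb].
  assert (H : Rbar_le b (Glb_Rbar E)) by (apply Hglb; exact Hb).
  rewrite (Glb_Rbar_nonneg_finite x0 Ex0) in H. exact H.
Qed.

End InfimumOfNonnegSet.

Lemma ex_RInt_continuous_R (f : R -> R) a b :
  (forall x, continuous f x) -> ex_RInt f a b.
Proof. intros Hf. apply (ex_RInt_continuous (V:=R_CompleteNormedModule)); auto. Qed.

Lemma abs_RInt_le_RInt (f g : R -> R) a b : a <= b ->
  (forall x, continuous f x) -> (forall x, continuous g x) ->
  (forall x, a <= x <= b -> Rabs (f x) <= g x) -> Rabs (RInt f a b) <= RInt g a b.
Proof.
  intros Hab Hf Hg Hfg.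
  apply (Rle_trans _ (RInt (fun x => Rabs (f x)) a b)).
  - apply abs_RInt_le; auto. apply ex_RInt_continuous_R; auto.
  - apply RInt_le; auto.
    + apply ex_RInt_continuous_R. intros; apply continuous_Rabs_comp; auto.
    + apply ex_RInt_continuous_R; auto.
    + intros; apply Hfg; lra.
Qed.

Lemma C1_RInt_Derive f a b : Defs.C1 f -> RInt (Derive f) a b = f b - f a.
Proof. intros Hf. apply RInt_Derive; intros; apply Hf. Qed.

Lemma C1_of_is_derive (f f' : R -> R) :
  (forall t, is_derive f t (f' t)) -> (forall t, continuous f' t) -> Defs.C1 f.
Proof.
  intros Hd Hc t. split; [eexists; apply Hd|].
  apply (continuous_ext f'); [|apply Hc].
  intros s; symmetry; apply is_derive_unique, Hd.
Qed.

Lemma continuous_derivable (f : R -> R) x : ex_derive f x -> continuous f x.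
Proof. apply (ex_derive_continuous (K:=R_AbsRing) (V:=R_NormedModule)). Qed.

Lemma continuous_Rmult_l c (f : R -> R) x :
  continuous f x -> continuous (fun t => c * f t) x.
Proof. intros Hf. apply (continuous_mult (fun _ => c) f); [apply continuous_const | exact Hf]. Qed.

(* [6 s (1 - s)] on [0, 1] and [0] outside. *)
Definition bump (s : R) : R := 3 * (s * (1 - s) + Rabs (s * (1 - s))).

Definition smoothstep (s : R) : R := RInt bump 0 s.

Lemma bump_continuous s : continuous bump s.
Proof.
  apply continuous_Rmult_l, (continuous_plus (fun s => s * (1 - s))).
  - apply continuous_derivable; auto_derive; auto.
  - apply continuous_Rabs_comp, continuous_derivable; auto_derive; auto.
Qed.

Lemma bump_nonneg s : 0 <= bump s.
Proof. unfold bump. generalize (Rle_abs (- (s * (1 - s)))); rewrite Rabs_Ropp; lra. Qed.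

Lemma bump_out s : s <= 0 \/ 1 <= s -> bump s = 0.
Proof.
  intros Hs. unfold bump.
  rewrite Rabs_left1 by (destruct Hs; nra). ring.
Qed.

Lemma bump_in s : 0 <= s <= 1 -> bump s = 6 * s - 6 * s ^ 2.
Proof. intros Hs. unfold bump. rewrite Rabs_pos_eq by nra. ring. Qed.

Lemma bump_pos_inv s : 0 < bump s -> 0 < s < 1.
Proof.
  intros Hb. destruct (Rle_lt_dec s 0), (Rle_lt_dec 1 s);
    try (rewrite bump_out in Hb; lra). lra.
Qed.

Lemma is_derive_smoothstep s : is_derive smoothstep s (bump s).
Proof.
  apply (is_derive_RInt bump smoothstep 0 s); [|apply bump_continuous].
  apply filter_forall; intros b.
  apply (RInt_correct (V:=R_CompleteNormedModule)), ex_RInt_continuous_R, bump_continuous.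
Qed.

Lemma smoothstep_le_0 s : s <= 0 -> smoothstep s = 0.
Proof.
  intros Hs. unfold smoothstep.
  rewrite (RInt_ext bump (fun _ => 0)), RInt_const.
  - unfold scal; simpl; unfold mult; simpl; ring.
  - intros x Hx. apply bump_out.
    rewrite Rmin_right, Rmax_left in Hx by lra. lra.
Qed.

Lemma smoothstep_ge_1 s : 1 <= s -> smoothstep s = 1.
Proof.
  intros Hs. unfold smoothstep.
  rewrite <- (RInt_Chasles bump 0 1 s) by apply ex_RInt_continuous_R, bump_continuous.
  rewrite (RInt_ext bump (fun _ => 0) 1 s), RInt_const.
  2: { intros x Hx. apply bump_out. rewrite Rmin_left in Hx; lra. }
  rewrite (RInt_ext bump (fun x => Derive (fun x => 3 * x ^ 2 - 2 * x ^ 3) x)).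
  2: { intros x Hx. rewrite bump_in.
       - apply sym_eq, is_derive_unique. auto_derive; auto; ring.
       - rewrite Rmin_left, Rmax_right in Hx; lra. }
  rewrite RInt_Derive.
  - unfold scal, plus; simpl; unfold mult, plus; simpl; ring.
  - intros; auto_derive; auto.
  - intros x _. apply (continuous_ext (fun x => 6 * x - 6 * x ^ 2)).
    + intros y; apply sym_eq, is_derive_unique; auto_derive; auto; ring.
    + apply continuous_derivable; auto_derive; auto.
Qed.

(* [stage k] rises from 0 to 1 on [[k/3, (k+1)/3]] and is constant elsewhere. *)
Definition stage (k t : R) : R := smoothstep (3 * t - k).

Lemma is_derive_stage k t : is_derive (stage k) t (3 * bump (3 * t - k)).
Proof.
  unfold stage. auto_derive.
  - eexists; apply is_derive_smoothstep.
  - rewrite (is_derive_unique _ _ _ (is_derive_smoothstep _)). unfold Rminus. ring.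
Qed.

Lemma Derive_stage k t : Derive (stage k) t = 3 * bump (3 * t - k).
Proof. apply is_derive_unique, is_derive_stage. Qed.

Lemma stage_continuous_derivative k t : continuous (fun t => 3 * bump (3 * t - k)) t.
Proof.
  apply continuous_Rmult_l, (continuous_comp (fun t => 3 * t - k) bump).
  - apply continuous_derivable; auto_derive; auto.
  - apply bump_continuous.
Qed.

Lemma stage_0 k : 0 <= k -> stage k 0 = 0.
Proof. intros Hk. apply smoothstep_le_0. lra. Qed.

Lemma stage_1 k : k <= 2 -> stage k 1 = 1.
Proof. intros Hk. apply smoothstep_ge_1. lra. Qed.

Lemma continuous_sqr (f : R -> R) x : continuous f x -> continuous (fun t => f t ^ 2) x.
Proof.
  intros Hf. apply (continuous_ext (fun t => f t * f t)); [intros; simpl; ring|].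
  apply (continuous_mult f f); auto.
Qed.

Lemma speed_continuous d lam cy cx t : Defs.C1 cy ->
  (forall i, (i < d)%nat -> Defs.C1 (cx i)) -> continuous (speed d lam cy cx) t.
Proof.
  intros Hy Hx. apply continuous_sqrt_comp.
  apply (continuous_plus (fun t => Derive cy t ^ 2)); [apply continuous_sqr, Hy|].
  apply (continuous_sum_upto d (fun i t => exp (-2 * lam i * cy t) * Derive (cx i) t ^ 2)).
  intros i Hi. apply (continuous_mult (fun t => exp (-2 * lam i * cy t))).
  - apply continuous_exp_comp, continuous_Rmult_l, continuous_derivable, Hy.
  - apply continuous_sqr, Hx, Hi.
Qed.

Lemma speed_ge_abs_Derive_y d lam cy cx t :
  Rabs (Derive cy t) <= speed d lam cy cx t.
Proof.
  unfold speed. rewrite <- sqrt_Rsqr_abs. apply sqrt_le_1_alt.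
  assert (0 <= sum_upto d (fun i => exp (-2 * lam i * cy t) * Derive (cx i) t ^ 2)).
  { apply sum_upto_nonneg; intros.
    apply Rmult_le_pos; [apply Rlt_le, exp_pos | apply pow2_ge_0]. }
  unfold Rsqr; simpl in *; lra.
Qed.

Lemma speed_ge_abs_Derive_x d lam cy cx t i : (i < d)%nat ->
  Rabs (Derive (cx i) t) <= exp (lam i * cy t) * speed d lam cy cx t.
Proof.
  intros Hi. set (w := exp (- lam i * cy t) * Rabs (Derive (cx i) t)).
  assert (Hw : 0 <= w) by (apply Rmult_le_pos; [apply Rlt_le, exp_pos | apply Rabs_pos]).
  assert (Hterm : w ^ 2 = exp (-2 * lam i * cy t) * Derive (cx i) t ^ 2).
  { unfold w. rewrite Rpow_mult_distr, pow2_abs. f_equal.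
    simpl. rewrite Rmult_1_r, <- exp_plus. f_equal; ring. }
  assert (Hle : w <= speed d lam cy cx t).
  { rewrite <- (sqrt_pow2 w Hw). apply sqrt_le_1_alt. rewrite Hterm.
    assert (exp (-2 * lam i * cy t) * Derive (cx i) t ^ 2 <=
            sum_upto d (fun i => exp (-2 * lam i * cy t) * Derive (cx i) t ^ 2)).
    { apply (sum_upto_ge_term d (fun j => exp (-2 * lam j * cy t) * Derive (cx j) t ^ 2));
        auto; intros.
      apply Rmult_le_pos; [apply Rlt_le, exp_pos | apply pow2_ge_0]. }
    generalize (pow2_ge_0 (Derive cy t)); lra. }
  assert (Hinv : exp (lam i * cy t) * exp (- lam i * cy t) = 1)
    by (rewrite <- exp_plus, <- exp_0; f_equal; ring).
  replace (Rabs (Derive (cx i) t)) with (exp (lam i * cy t) * w)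
    by (unfold w; rewrite <- Rmult_assoc, Hinv; ring).
  apply Rmult_le_compat_l; [apply Rlt_le, exp_pos | exact Hle].
Qed.

Lemma exp_le_compat x y : x <= y -> exp x <= exp y.
Proof. intros [Hlt | ->]; [apply Rlt_le, exp_increasing, Hlt | apply Rle_refl]. Qed.

Lemma le_two_mul_div_1_add_sqr a E w : 0 < w ->
  a <= E * w -> a * w <= E -> a <= 2 * E * w / (1 + w ^ 2).
Proof.
  intros Hw H1 H2. apply (Rmult_le_reg_r (1 + w ^ 2)); [nra|].
  unfold Rdiv. rewrite Rmult_assoc, Rinv_l by nra. nra.
Qed.

Lemma is_derive_atan_exp l m s :
  is_derive (fun s => atan (exp (l * (s - m)))) s
    (l * exp (l * (s - m)) / (1 + exp (l * (s - m)) ^ 2)).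
Proof.
  auto_derive; auto. unfold Rminus.
  assert (0 < exp (l * (s + - m))) by apply exp_pos. simpl. field. nra.
Qed.

Definition arc_length d lam (cy : R -> R) (cx : nat -> R -> R) (t : R) : R :=
  RInt (speed d lam cy cx) 0 t.

Section C1Curve.
Variables (d : nat) (lam : nat -> R) (cy : R -> R) (cx : nat -> R -> R).
Hypothesis cy_C1 : Defs.C1 cy.
Hypothesis cx_C1 : forall i, (i < d)%nat -> Defs.C1 (cx i).

Let v := speed d lam cy cx.
Let s := arc_length d lam cy cx.
Let L := curve_length d lam cy cx.

Let v_continuous t : continuous v t.
Proof. apply speed_continuous; auto. Qed.

Let ex_RInt_v a b : ex_RInt v a b.
Proof. apply ex_RInt_continuous_R, v_continuous. Qed.

Lemma is_derive_arc_length t : is_derive s t (v t).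
Proof.
  apply (is_derive_RInt v s 0 t); [|apply v_continuous].
  apply filter_forall; intros b. apply (RInt_correct (V:=R_CompleteNormedModule)), ex_RInt_v.
Qed.

Lemma curve_length_nonneg : 0 <= L.
Proof. apply RInt_ge_0; auto; [lra | intros; apply sqrt_pos]. Qed.

Lemma abs_sub_start_le_arc_length t : 0 <= t ->
  Rabs (cy t - cy 0) <= s t.
Proof.
  intros Ht. rewrite <- C1_RInt_Derive by auto.
  apply abs_RInt_le_RInt; auto; [apply cy_C1|].
  intros; apply speed_ge_abs_Derive_y.
Qed.

Lemma abs_sub_end_le_arc_length t : t <= 1 ->
  Rabs (cy 1 - cy t) <= L - s t.
Proof.
  intros Ht. replace (L - s t) with (RInt v t 1).
  2: { generalize (RInt_Chasles v 0 t 1 (ex_RInt_v _ _) (ex_RInt_v _ _)).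
       unfold L, s, v, curve_length, arc_length, plus; simpl; lra. }
  rewrite <- C1_RInt_Derive by auto.
  apply abs_RInt_le_RInt; auto; [apply cy_C1|].
  intros; apply speed_ge_abs_Derive_y.
Qed.

(* Along the curve the height is at most [y0 + s] and at most [y1 + L - s], so
   [exp (l y) <= E / cosh u = 2 E w / (1 + w^2)] with [w = exp (l (s - m))]; this weight is exactly the
   derivative of [2 E / l * atan (exp u)] in [s], whose total variation is at most [pi E / l]. *)
Lemma abs_horizontal_displacement_le i : (i < d)%nat -> 0 < lam i ->
  Rabs (cx i 1 - cx i 0) <= PI * exp (lam i * ((cy 0 + cy 1 + L) / 2)) / lam i.
Proof.
  intros Hi Hl. set (l := lam i) in *. set (E := exp (l * ((cy 0 + cy 1 + L) / 2))).
  set (m := (cy 1 - cy 0 + L) / 2).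
  set (phi := fun s => 2 * E / l * atan (exp (l * (s - m)))).
  set (w := fun s => exp (l * (s - m))).
  set (dphi := fun s => 2 * E / l * (l * w s / (1 + w s ^ 2))).
  assert (HE : 0 < E) by apply exp_pos.
  assert (Hphi : forall t, is_derive (fun t => phi (s t)) t (v t * dphi (s t))).
  { intros t. apply (is_derive_comp phi s t); [|apply is_derive_arc_length].
    apply (is_derive_scal (fun s => atan (exp (l * (s - m))))), is_derive_atan_exp. }
  assert (Hdphi : forall t, continuous (fun t => v t * dphi (s t)) t).
  { intros t. apply (continuous_mult v); [apply v_continuous|].
    apply (continuous_comp s dphi).
    - apply continuous_derivable. eexists; apply is_derive_arc_length.
    - apply continuous_derivable. unfold dphi, w. auto_derive.
      assert (0 < exp (l * (s t - m))) by apply exp_pos. nra. }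
  rewrite <- C1_RInt_Derive by auto.
  apply (Rle_trans _ (RInt (fun t => v t * dphi (s t)) 0 1)).
  - apply abs_RInt_le_RInt; auto; [lra | apply cx_C1, Hi |].
    intros t Ht. eapply Rle_trans; [apply (speed_ge_abs_Derive_x d lam cy cx t i Hi)|].
    fold v l. rewrite (Rmult_comm (v t)).
    apply Rmult_le_compat_r; [apply sqrt_pos|].
    assert (Hw : 0 < w (s t)) by apply exp_pos.
    assert (Hy0 := abs_sub_start_le_arc_length t (proj1 Ht)).
    assert (Hy1 := abs_sub_end_le_arc_length t (proj2 Ht)).
    apply Rabs_le_between in Hy0, Hy1. fold s L in Hy0, Hy1.
    assert (0 <= l * (cy 0 + s t - cy t)) by (apply Rmult_le_pos; lra).
    assert (0 <= l * (cy 1 + L - s t - cy t)) by (apply Rmult_le_pos; lra).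
    unfold dphi. replace (2 * E / l * (l * w (s t) / (1 + w (s t) ^ 2)))
      with (2 * E * w (s t) / (1 + w (s t) ^ 2)) by (field; nra).
    apply le_two_mul_div_1_add_sqr; auto; unfold E, w, m; rewrite <- exp_plus;
      apply exp_le_compat; lra.
  - assert (Hint : RInt (fun t => v t * dphi (s t)) 0 1 = phi (s 1) - phi (s 0)).
    { apply is_RInt_unique, (is_RInt_derive (fun t => phi (s t))); intros; auto. }
    rewrite Hint. unfold phi.
    assert (H1 := atan_bound (exp (l * (s 1 - m)))).
    assert (H0 : 0 <= atan (exp (l * (s 0 - m)))).
    { rewrite <- atan_0. left. apply atan_increasing, exp_pos. }
    assert (0 < 2 * E / l) by (apply Rdiv_lt_0_compat; lra).
    replace (PI * E / l) with (2 * E / l * (PI / 2)) by (field; lra). nra.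
Qed.

End C1Curve.

Lemma curve_length_le_of_speed_le d lam cy cx (F : R -> R) :
  Defs.C1 cy -> (forall i, (i < d)%nat -> Defs.C1 (cx i)) -> Defs.C1 F ->
  (forall t, 0 <= t <= 1 -> speed d lam cy cx t <= Derive F t) ->
  curve_length d lam cy cx <= F 1 - F 0.
Proof.
  intros Hy Hx HF Hle. rewrite <- C1_RInt_Derive by exact HF.
  apply RInt_le; [lra | | | intros; apply Hle; lra];
    apply ex_RInt_continuous_R; intros; [apply speed_continuous; auto | apply HF].
Qed.

(* Climb from [y] to [Y] during the first third of [[0, 1]], cross horizontally
   at height [Y] during the second, and descend to [y'] during the last. *)
Definition detour_y (y y' Y t : R) : R := y + (Y - y) * stage 0 t + (y' - Y) * stage 2 t.
Definition detour_x (a b t : R) : R := a + (b - a) * stage 1 t.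

Lemma is_derive_detour_y y y' Y t : is_derive (detour_y y y' Y) t
  ((Y - y) * (3 * bump (3 * t - 0)) + (y' - Y) * (3 * bump (3 * t - 2))).
Proof.
  unfold detour_y. auto_derive.
  - repeat split; eexists; apply is_derive_stage.
  - rewrite !Derive_stage. ring.
Qed.

Lemma is_derive_detour_x a b t :
  is_derive (detour_x a b) t ((b - a) * (3 * bump (3 * t - 1))).
Proof.
  unfold detour_x. auto_derive; [eexists; apply is_derive_stage|].
  rewrite Derive_stage. ring.
Qed.

Lemma detour_y_C1 y y' Y : Defs.C1 (detour_y y y' Y).
Proof.
  eapply C1_of_is_derive; [intros; apply is_derive_detour_y|].
  intros t. apply (continuous_plus (fun t => (Y - y) * _));
    apply continuous_Rmult_l, stage_continuous_derivative.
Qed.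

Lemma detour_x_C1 a b : Defs.C1 (detour_x a b).
Proof.
  eapply C1_of_is_derive; [intros; apply is_derive_detour_x|].
  intros t. apply continuous_Rmult_l, stage_continuous_derivative.
Qed.

Lemma detour_admissible d (p q : Pt) Y :
  admissible_curve d p q (detour_y (fst p) (fst q) Y) (fun i => detour_x (snd p i) (snd q i)).
Proof.
  split; [apply detour_y_C1|]. split; [intros; apply detour_x_C1|].
  unfold detour_y, detour_x. rewrite !stage_0, !stage_1 by lra.
  split; [ring|]. split; [ring|]. intros; split; ring.
Qed.

Lemma sqrt_add_sqr_le a b : sqrt (a ^ 2 + b ^ 2) <= Rabs a + Rabs b.
Proof.
  assert (0 <= Rabs a) by apply Rabs_pos. assert (0 <= Rabs b) by apply Rabs_pos.
  rewrite <- (sqrt_pow2 (Rabs a + Rabs b)) by lra.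
  apply sqrt_le_1_alt. rewrite <- (pow2_abs a), <- (pow2_abs b). nra.
Qed.

Lemma detour_length_le d lam (p q : Pt) Y : fst p <= Y -> fst q <= Y ->
  sum_upto d (fun i => exp (-2 * lam i * Y) * (snd p i - snd q i) ^ 2) <= 1 ->
  curve_length d lam (detour_y (fst p) (fst q) Y) (fun i => detour_x (snd p i) (snd q i))
    <= (Y - fst p) + (Y - fst q) + 1.
Proof.
  intros Hp Hq HS. set (y := fst p) in *. set (y' := fst q) in *.
  set (budget := fun t => (Y - y) * stage 0 t + (Y - y') * stage 2 t + stage 1 t).
  assert (Hbudget : forall t, is_derive budget t
    ((Y - y) * (3 * bump (3 * t - 0)) + (Y - y') * (3 * bump (3 * t - 2))
     + 3 * bump (3 * t - 1))).
  { intros t. unfold budget. auto_derive.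
    - repeat split; eexists; apply is_derive_stage.
    - rewrite !Derive_stage. ring. }
  replace ((Y - y) + (Y - y') + 1) with (budget 1 - budget 0)
    by (unfold budget; rewrite !stage_0, !stage_1 by lra; ring).
  apply curve_length_le_of_speed_le;
    [apply detour_y_C1 | intros; apply detour_x_C1 | |].
  { eapply C1_of_is_derive; [exact Hbudget|]. intros t.
    apply (continuous_plus (fun t => (Y - y) * _ + (Y - y') * _)); [
      apply (continuous_plus (fun t => (Y - y) * _)); apply continuous_Rmult_l |];
      apply stage_continuous_derivative. }
  intros t _. unfold speed.
  rewrite (is_derive_unique _ _ _ (Hbudget t)),
    (is_derive_unique _ _ _ (is_derive_detour_y _ _ _ t)).
  set (b0 := bump (3 * t - 0)). set (b1 := bump (3 * t - 1)). set (b2 := bump (3 * t - 2)).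
  assert (0 <= b0) by apply bump_nonneg. assert (0 <= b1) by apply bump_nonneg.
  assert (0 <= b2) by apply bump_nonneg.
  assert (Hhoriz : sum_upto d (fun i => exp (-2 * lam i * detour_y y y' Y t) *
                     Derive (detour_x (snd p i) (snd q i)) t ^ 2) <= (3 * b1) ^ 2).
  { apply (Rle_trans _ (sum_upto d (fun i =>
      (3 * b1) ^ 2 * (exp (-2 * lam i * Y) * (snd p i - snd q i) ^ 2)))).
    - apply sum_upto_le. intros i _.
      rewrite (is_derive_unique _ _ _ (is_derive_detour_x _ _ t)). fold b1.
      destruct (Req_dec b1 0) as [-> | Hb1]; [right; ring|].
      (* the horizontal stage is active only at the top height [Y] *)
      destruct (bump_pos_inv (3 * t - 1)) as [Ht0 Ht1]; [fold b1; lra|].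
      replace (detour_y y y' Y t) with Y; [right; ring|].
      unfold detour_y, stage. rewrite smoothstep_ge_1, smoothstep_le_0 by lra. ring.
    - rewrite sum_upto_scal_l. generalize (pow2_ge_0 (3 * b1)). nra. }
  eapply Rle_trans; [apply sqrt_le_1_alt, Rplus_le_compat_l, Hhoriz|].
  eapply Rle_trans; [apply sqrt_add_sqr_le|].
  rewrite (Rabs_pos_eq (3 * b1)) by lra. apply Rplus_le_compat_r, Rabs_le. nra.
Qed.

Lemma exp_neg_mul_le_1 x : 0 <= x -> exp (- x) * x <= 1.
Proof.
  intros Hx. assert (Hinv : exp (- x) * exp x = 1)
    by (rewrite <- exp_plus, <- exp_0; f_equal; ring).
  assert (x <= exp x).
  { destruct (Req_dec x 0) as [-> | Hx0]; [rewrite exp_0; lra|].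
    generalize (exp_ineq1 x Hx0); lra. }
  rewrite <- Hinv. apply Rmult_le_compat_l; [apply Rlt_le, exp_pos | lra].
Qed.

(* Raising the crossing height by [s] shrinks the [i]-th horizontal cost by
   [exp (-2 l s) <= 1 / (2 l s)], and [2 l s >= d pi^2 / l^2] as soon as [l0 <= l]. *)
Lemma exp_mul_sqr_le_inv d l0 l H D : (1 <= d)%nat -> 0 < l0 <= l ->
  Rabs D <= PI * exp (l * H) / l ->
  exp (-2 * l * (H + INR d * PI ^ 2 / (2 * l0 ^ 3))) * D ^ 2 <= / INR d.
Proof.
  intros Hd [Hl0 Hl] HD. set (s := INR d * PI ^ 2 / (2 * l0 ^ 3)).
  assert (Hdpos : 0 < INR d) by (apply lt_0_INR; lia).
  assert (Hpi : 0 < PI) by apply PI_RGT_0.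
  assert (Hpi2 : 0 < PI ^ 2) by (apply pow_lt; lra).
  assert (Hl03 : 0 < l0 ^ 3) by (apply pow_lt; lra).
  assert (Hs : 0 < s) by (unfold s; apply Rdiv_lt_0_compat; [apply Rmult_lt_0_compat|]; lra).
  set (D' := exp (- l * H) * Rabs D).
  assert (Hsplit : exp (-2 * l * (H + s)) * D ^ 2 = exp (- (2 * l * s)) * D' ^ 2).
  { unfold D'. rewrite Rpow_mult_distr, pow2_abs, <- Rmult_assoc. f_equal.
    simpl. rewrite Rmult_1_r, <- !exp_plus. f_equal; ring. }
  assert (HD' : 0 <= D' <= PI / l).
  { split; [apply Rmult_le_pos; [apply Rlt_le, exp_pos | apply Rabs_pos]|].
    assert (Hinv : exp (- l * H) * exp (l * H) = 1)
      by (rewrite <- exp_plus, <- exp_0; f_equal; ring).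
    apply (Rle_trans _ (exp (- l * H) * (PI * exp (l * H) / l))).
    - apply Rmult_le_compat_l; [apply Rlt_le, exp_pos | exact HD].
    - right. replace (exp (- l * H) * (PI * exp (l * H) / l))
        with (PI / l * (exp (- l * H) * exp (l * H))) by (field; lra).
      rewrite Hinv; ring. }
  assert (Hmargin : (PI / l) ^ 2 * INR d <= 2 * l * s).
  { unfold s. assert (l0 ^ 3 <= l ^ 3) by (apply pow_incr; lra).
    apply (Rmult_le_reg_r (l ^ 2 * l0 ^ 3)); [nra|].
    replace ((PI / l) ^ 2 * INR d * (l ^ 2 * l0 ^ 3)) with (PI ^ 2 * INR d * l0 ^ 3)
      by (field; lra).
    replace (2 * l * (INR d * PI ^ 2 / (2 * l0 ^ 3)) * (l ^ 2 * l0 ^ 3))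
      with (PI ^ 2 * INR d * l ^ 3) by (field; lra).
    apply Rmult_le_compat_l; nra. }
  assert (Hdecay := exp_neg_mul_le_1 (2 * l * s) ltac:(nra)).
  rewrite Hsplit. apply (Rmult_le_reg_r (INR d)); [lra|].
  rewrite Rinv_l by lra.
  assert (D' ^ 2 <= (PI / l) ^ 2) by (apply pow_incr; lra).
  assert (0 < exp (- (2 * l * s))) by apply exp_pos.
  apply (Rle_trans _ (exp (- (2 * l * s)) * ((PI / l) ^ 2 * INR d))); [|nra].
  rewrite Rmult_assoc. apply Rmult_le_compat_l; nra.
Qed.

Definition length_set d lam (p q : Pt) (L : R) : Prop :=
  exists cy cx, admissible_curve d p q cy cx /\ L = curve_length d lam cy cx.

Definition rho_set d lam (p q : Pt) (t : R) : Prop :=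
  0 <= t /\ sum_upto d (fun i => exp (-2 * lam i * (t + Rmax (fst p) (fst q))) *
                                  (snd p i - snd q i) ^ 2) <= 1.

Lemma rdist_eq d lam p q : rdist d lam p q = real (Glb_Rbar (length_set d lam p q)).
Proof. reflexivity. Qed.

Lemma rho_eq d lam p q :
  rho d lam p q = 1 + Rabs (fst p - fst q) + 2 * real (Glb_Rbar (rho_set d lam p q)).
Proof. reflexivity. Qed.

Lemma Rmax_eq_half_add_abs y y' : Rmax y y' = (y + y' + Rabs (y - y')) / 2.
Proof.
  unfold Rmax. destruct (Rle_dec y y').
  - rewrite Rabs_left1 by lra. field.
  - rewrite Rabs_pos_eq by lra. field.
Qed.

Lemma length_set_nonneg d lam p q L : length_set d lam p q L -> 0 <= L.
Proof.
  intros (cy & cx & (Hy & Hx & _) & ->). apply curve_length_nonneg; auto.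
Qed.

Lemma length_set_detour d lam p q Y : length_set d lam p q
  (curve_length d lam (detour_y (fst p) (fst q) Y) (fun i => detour_x (snd p i) (snd q i))).
Proof. do 2 eexists. split; [apply detour_admissible | reflexivity]. Qed.

Lemma rdist_le_rho_set d lam p q t : rho_set d lam p q t ->
  rdist d lam p q <= 1 + Rabs (fst p - fst q) + 2 * t.
Proof.
  intros [Ht HS]. set (Y := t + Rmax (fst p) (fst q)).
  assert (Hmax := Rmax_eq_half_add_abs (fst p) (fst q)).
  rewrite rdist_eq. eapply Rle_trans.
  - apply (Glb_Rbar_nonneg_le _ (length_set_nonneg d lam p q)),
      (length_set_detour d lam p q Y).
  - eapply Rle_trans; [apply detour_length_le; auto|]; unfold Y;
      generalize (Rmax_l (fst p) (fst q)) (Rmax_r (fst p) (fst q)); lra.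
Qed.

Definition height_margin d (lam : nat -> R) : R := INR d * PI ^ 2 / (2 * lam O ^ 3).

Section LowerBound.
Variables (d : nat) (lam : nat -> R).
Hypothesis d_pos : (1 <= d)%nat.
Hypothesis lam_pos : forall i, (i < d)%nat -> 0 < lam i.
Hypothesis lam_0_le : forall i, (i < d)%nat -> lam O <= lam i.

Lemma height_margin_pos : 0 < height_margin d lam.
Proof.
  assert (0 < INR d) by (apply lt_0_INR; lia).
  assert (0 < PI ^ 2) by (apply pow_lt, PI_RGT_0).
  assert (0 < lam O ^ 3) by (apply pow_lt, lam_pos; lia).
  unfold height_margin. apply Rdiv_lt_0_compat; [apply Rmult_lt_0_compat|]; lra.
Qed.

Lemma curve_length_in_rho_set p q cy cx : admissible_curve d p q cy cx ->
  rho_set d lam p q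
    ((curve_length d lam cy cx - Rabs (fst p - fst q)) / 2 + height_margin d lam).
Proof.
  intros Hadm. destruct Hadm as (Hy & Hx & Hy0 & Hy1 & Hxi).
  set (L := curve_length d lam cy cx).
  assert (HL : Rabs (fst p - fst q) <= L).
  { rewrite Rabs_minus_sym, <- Hy0, <- Hy1.
    apply (abs_sub_start_le_arc_length d lam cy cx Hy Hx 1); lra. }
  assert (Hm := height_margin_pos).
  split; [lra|]. apply sum_upto_le_1; auto. intros i Hi.
  replace ((L - Rabs (fst p - fst q)) / 2 + height_margin d lam + Rmax (fst p) (fst q))
    with ((fst p + fst q + L) / 2 + height_margin d lam)
    by (rewrite Rmax_eq_half_add_abs; field).
  apply exp_mul_sqr_le_inv; auto.
  destruct (Hxi i Hi) as [Hx0 Hx1].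
  rewrite <- Hy0, <- Hy1, <- Hx0, <- Hx1, Rabs_minus_sym.
  apply abs_horizontal_displacement_le; auto.
Qed.

Lemma rho_le_curve_length p q cy cx : admissible_curve d p q cy cx ->
  rho d lam p q <= curve_length d lam cy cx + (1 + 2 * height_margin d lam).
Proof.
  intros Hadm. rewrite rho_eq.
  assert (Hin := curve_length_in_rho_set p q cy cx Hadm).
  assert (real (Glb_Rbar (rho_set d lam p q)) <=
          (curve_length d lam cy cx - Rabs (fst p - fst q)) / 2 + height_margin d lam)
    by (apply (Glb_Rbar_nonneg_le _ (fun t Ht => proj1 Ht)), Hin).
  lra.
Qed.

End LowerBound.

Theorem mainTheorem8 (d : nat) (lam : nat -> R)
  (hd : (1 <= d)%nat)
  (hpos : forall i, (i < d)%nat -> 0 < lam i)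
  (hmono : forall i j, (i <= j)%nat -> (j < d)%nat -> lam i <= lam j) :
  exists C : R, 0 < C /\
    forall p q : Pt, rdist d lam p q <= rho d lam p q /\
                     rho d lam p q <= rdist d lam p q + C.
Proof.
  assert (hmin : forall i, (i < d)%nat -> lam O <= lam i) by (intros; apply hmono; lia).
  assert (Hm := height_margin_pos d lam hd hpos).
  exists (1 + 2 * height_margin d lam). split; [lra|]. intros p q.
  assert (Hrho_set : rho_set d lam p q _)
    by exact (curve_length_in_rho_set d lam hd hpos hmin p q _ _ (detour_admissible d p q 0)).
  split.
  - rewrite rho_eq.
    enough ((rdist d lam p q - 1 - Rabs (fst p - fst q)) / 2
            <= real (Glb_Rbar (rho_set d lam p q))) by lra.
    apply (Glb_Rbar_nonneg_ge (rho_set d lam p q) (fun t Ht => proj1 Ht) _ _ Hrho_set).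
    intros t Ht. generalize (rdist_le_rho_set d lam p q t Ht); lra.
  - rewrite rdist_eq.
    enough (rho d lam p q - (1 + 2 * height_margin d lam)
            <= real (Glb_Rbar (length_set d lam p q))) by lra.
    apply (Glb_Rbar_nonneg_ge (length_set d lam p q) (length_set_nonneg d lam p q) _ _
             (length_set_detour d lam p q 0)).
    intros L (cy & cx & Hadm & ->).
    generalize (rho_le_curve_length d lam hd hpos hmin p q cy cx Hadm); lra.
Qed.
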